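(* Let $V$ be a finite-dimensional real vector space and $2\le p\le\dim V$. The following assignment is a one-to-one correspondence between linear Dirac structures $(P,\Omega)$ of order $p$ on $V$ relative to $\mathbb R$ and pairs $(S,\Pi)$ consisting of a subspace $S\subset V^*$ and a $p$-vector $\Pi\in\Lambda^pS^*$ satisfying condition (H'): to $(P,\Omega)$ associate $L^\perp=\{(Z,\eta)\in\Lambda^{p-1}V\times V^*: Z\in\Lambda^{p-1}P,\ i_Z\Omega=\eta|_P\}$, $S=\{\eta\in V^*:\exists Z,\ (Z,\eta)\in L^\perp\}$, and $\Pi\in\Lambda^pS^*$ (with $S^*$ identified with $V/\mathrm{Ann}(S)$) defined by $\Pi(\eta)=Z|_{\Lambda^{p-1}S}$ for $(Z,\eta)\in L^\perp$ (this is well defined and skew-symmetric).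
   Context: A linear Dirac structure of order $p$ on $V$ relative to $\mathbb R$ is a pair $(P,\Omega)$ where $P\subset V$ is a subspace and $\Omega\in\Lambda^pP^*$, satisfying condition (H): for all $Z_1,\dots,Z_{p-1}\in\Lambda^{p-1}P$ there exists $v\in P$ with $(i_{Z_1}\Omega)\wedge\dots\wedge(i_{Z_{p-1}}\Omega)=i_v\Omega$, where $(i_v\Omega)(Z)=\Omega(v\wedge Z)$ and $(i_Z\Omega)(w)=\Omega(Z\wedge w)$. For $\Pi\in\Lambda^pS^*$ and $\omega\in\Lambda^kS$, $\Pi(\omega)\in\Lambda^{p-k}S^*$ denotes the contraction $\langle\Pi(\omega),\xi\rangle=\Pi(\omega\wedge\xi)$. Condition (H'): for all $\omega_1,\dots,\omega_{p-1}\in\Lambda^{p-1}S$ there exists $\eta\in S$ with $\Pi(\omega_1)\wedge\dots\wedge\Pi(\omega_{p-1})=\Pi(\eta)$. *)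

(* V = R^n realised as row vectors 'rV[R]_n; V^* realised as
   'rV[R]_n via the standard pairing dpair.  Exterior algebra is encoded
   concretely: k-forms are functions on lists of vectors (only lists of
   length k with entries in the relevant subspace matter), and k-vectors are
   finite formal linear combinations of wedges of k vectors. *)
From HB Require Import structures.
From mathcomp Require Import all_boot all_order all_algebra.
From mathcomp Require Import reals.
Set Implicit Arguments. Unset Strict Implicit. Unset Printing Implicit Defensive.
Import Order.TTheory GRing.Theory Num.Theory.
Local Open Scope ring_scope.

Section Dirac.
Variables (R : realType) (n : nat).
Notation V := 'rV[R]_n.

Definition dpair (xi v : V) : R := \sum_(i < n) xi ord0 i * v ord0 i.

Definition in_sub (U : {vspace V}) (vs : seq V) : bool :=
  all (fun v => v \in U) vs.

Definition multilinear_on (U : {vspace V}) (k : nat) (F : seq V -> R) : Prop :=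
  forall (l r : seq V) (a : R) (u w : V),
    (size l + size r).+1 = k -> in_sub U l -> in_sub U r ->
    u \in U -> w \in U ->
    F (l ++ (a *: u + w) :: r) = a * F (l ++ u :: r) + F (l ++ w :: r).

Definition alternating_on (U : {vspace V}) (k : nat) (F : seq V -> R) : Prop :=
  forall vs : seq V, size vs = k -> in_sub U vs ->
    forall i j : nat, (i < j < k)%N -> nth 0 vs i = nth 0 vs j -> F vs = 0.

Definition kform_on (U : {vspace V}) (k : nat) (F : seq V -> R) : Prop :=
  multilinear_on U k F /\ alternating_on U k F.

Definition eq_on (U : {vspace V}) (k : nat) (F G : seq V -> R) : Prop :=
  forall vs : seq V, size vs = k -> in_sub U vs -> F vs = G vs.

(* a k-vector in Lambda^k U : sum_c c.1 * (c.2)_1 /\ ... /\ (c.2)_k *)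
Definition mvec := seq (R * seq V).
Definition mvec_in (U : {vspace V}) (k : nat) (Z : mvec) : bool :=
  all (fun c => (size c.2 == k) && in_sub U c.2) Z.

(* contraction: for Z a k-vector and F a (k+1)-form,
   contr Z F x = F(Z /\ x)  (i.e. (i_Z F)(x), resp. <F(Z), x>) *)
Definition contr (Z : mvec) (F : seq V -> R) (x : V) : R :=
  \sum_(c <- Z) c.1 * F (rcons c.2 x).

Definition wedge1 (k : nat) (alphas : seq (V -> R)) (us : seq V) : R :=
  \det (\matrix_(a < k, b < k) (nth (fun _ => 0) alphas a) (nth 0 us b)).

(* pairing <Z, xi_1 /\ ... /\ xi_k> of a k-vector on V with k covectors *)
Definition mpair (k : nat) (Z : mvec) (xs : seq V) : R :=
  \sum_(c <- Z) c.1 * wedge1 k (map dpair xs) c.2.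

Definition condH (p : nat) (P : {vspace V}) (Om : seq V -> R) : Prop :=
  forall Zs : seq mvec, size Zs = p.-1 -> all (mvec_in P p.-1) Zs ->
    exists v : V, v \in P /\
      forall us : seq V, size us = p.-1 -> in_sub P us ->
        wedge1 p.-1 (map (fun Z => contr Z Om) Zs) us = Om (v :: us).

(* condition (H')  -- S is a subspace of dual V, Pi in Lambda^p (dual S) *)
Definition condH' (p : nat) (S : {vspace V}) (Pi : seq V -> R) : Prop :=
  forall ws : seq mvec, size ws = p.-1 -> all (mvec_in S p.-1) ws ->
    exists eta : V, eta \in S /\
      forall xs : seq V, size xs = p.-1 -> in_sub S xs ->
        wedge1 p.-1 (map (fun w => contr w Pi) ws) xs = Pi (eta :: xs).

Definition linear_dirac (p : nat) (P : {vspace V}) (Om : seq V -> R) : Prop :=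
  kform_on P p Om /\ condH p P Om.

Definition dual_pair (p : nat) (S : {vspace V}) (Pi : seq V -> R) : Prop :=
  kform_on S p Pi /\ condH' p S Pi.

Definition in_Lperp (p : nat) (P : {vspace V}) (Om : seq V -> R)
    (Z : mvec) (eta : V) : Prop :=
  mvec_in P p.-1 Z /\ forall w : V, w \in P -> contr Z Om w = dpair eta w.

Definition assoc (p : nat) (P : {vspace V}) (Om : seq V -> R)
    (S : {vspace V}) (Pi : seq V -> R) : Prop :=
  (forall eta : V, eta \in S <-> exists Z : mvec, in_Lperp p P Om Z eta) /\
  (forall (Z : mvec) (eta : V), in_Lperp p P Om Z eta ->
     forall xs : seq V, size xs = p.-1 -> in_sub S xs ->
       Pi (eta :: xs) = mpair p.-1 Z xs).

End Dirac.

From mathcomp Require Import all_boot all_algebra.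
From mathcomp Require Import reals.
From mathcomp Require Import zify ring.
Set Implicit Arguments. Unset Strict Implicit. Unset Printing Implicit Defensive.
Import GRing.Theory Num.Theory.
Local Open Scope ring_scope.

(* The assignment is symmetric.  For (Z, eta) in L^perp and covectors xs in S,
   condition (H) applied to L^perp-partners of xs yields v in P with
   xs_1 /\ ... /\ xs_(p-1) = i_v Om on P, and then <Z, xs> = (-1)^(p-1) eta(v).
   This single identity shows that Pi is well defined, multilinear and
   alternating, that (S, Pi) satisfies (H'), and that (P, Om) is in turn the
   pair assigned to (S, Pi); for the last point, i_v Om is a form on P
   vanishing on P /\ Ann(S), hence a (p-1)-vector over S.  Injectivity then
   follows from symmetry, and surjectivity is symmetry applied to (S, Pi),
   which is a Dirac structure because (H') is (H) read in V^* = V. *)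

Lemma closed_pred_vspace (K : fieldType) (vT : vectType K) (Q : vT -> Prop) :
  Q 0 -> (forall a u w, Q u -> Q w -> Q (a *: u + w)) ->
  exists U : {vspace vT}, forall x, x \in U <-> Q x.
Proof.
move=> Q0 QC.
suff grow m (U : {vspace vT}) : (forall x, x \in U -> Q x) ->
    (\dim {:vT} - \dim U <= m)%N -> exists W : {vspace vT}, forall x, x \in W <-> Q x.
  apply: (grow _ 0%VS) => [x|//]; by rewrite memv0 => /eqP ->.
elim: m U => [|m IH] U QU dimU.
  exists U => x; split=> [|Qx]; first exact: QU.
  have /eqP -> : U == fullv by rewrite eqEdim subvf; lia.
  exact: memvf.
have [[x [Qx xU]]|noQ] := boolp.EM (exists x, Q x /\ x \notin U); last first.
  exists U => y; split=> [|Qy]; first exact: QU.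
  by apply/negPn/negP => yU; apply: noQ; exists y.
apply: (IH (U + <[x]>)%VS).
  move=> y /memv_addP [u uU [v /vlineP [c ->] ->]].
  by rewrite addrC -[u]scale1r; apply: QC => //; rewrite scale1r; apply: QU.
have sUUx : (U <= U + <[x]>)%VS by apply: addvSl.
have : U != (U + <[x]>)%VS.
  apply: contraNneq xU => ->; exact: subvP (addvSr U _) _ (memv_line x).
rewrite -(ltn_leqif (dimv_leqif_eq sUUx)) => ltU.
have := dimvS (subvf (U + <[x]>)%VS); lia.
Qed.

Definition omit (T : Type) (j : nat) (s : seq T) : seq T := take j s ++ drop j.+1 s.

Lemma size_omit (T : Type) (j : nat) (s : seq T) :
  (j < size s)%N -> size (omit j s) = (size s).-1.
Proof. by move=> lt_js; rewrite size_cat size_take lt_js size_drop; lia. Qed.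

Lemma nth_omit (T : Type) (x0 : T) (s : seq T) (j i : nat) :
  nth x0 (omit j s) i = nth x0 s (bump j i).
Proof.
rewrite /bump nth_cat size_take.
case: (ltnP j (size s)) => hj.
  case: (ltnP i j) => hij; first by rewrite nth_take // add0n.
  rewrite nth_drop /=; congr nth; lia.
rewrite take_oversize // drop_oversize ?nth_nil; last by lia.
case: (ltnP i (size s)) => his.
  by have -> : (j <= i)%N = false by apply/negbTE; rewrite -ltnNge; lia.
by rewrite [RHS]nth_default // (leq_trans his) // leq_addl.
Qed.

Lemma omit_cons (T : Type) (x : T) (s : seq T) (j : nat) :
  omit j.+1 (x :: s) = x :: omit j s.
Proof. by []. Qed.

Section DualPairing.
Variables (R : realType) (n : nat).
Local Notation V := 'rV[R]_n.

Definition lin_fun (g : V -> R) := forall a u w, g (a *: u + w) = a * g u + g w.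

Lemma lin_fun_sum (g : V -> R) (I : Type) (r : seq I) (c : I -> R) (e : I -> V) :
  lin_fun g -> g (\sum_(i <- r) c i *: e i) = \sum_(i <- r) c i * g (e i).
Proof.
move=> lin_g; have g0 : g 0 = 0.
  by have := lin_g (-1) 0 0; rewrite scaler0 addr0 mulN1r addNr.
elim: r => [|i r IH]; first by rewrite !big_nil.
by rewrite !big_cons -[_ *: _ + _]/(c i *: e i + _) lin_g IH.
Qed.

Lemma dpairC (x y : V) : dpair x y = dpair y x.
Proof. by apply: eq_bigr => i _; rewrite mulrC. Qed.

Lemma dpairPl (a : R) (u w x : V) : dpair (a *: u + w) x = a * dpair u x + dpair w x.
Proof.
rewrite /dpair mulr_sumr -big_split /=; apply: eq_bigr => i _.
by rewrite !mxE mulrDl mulrA.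
Qed.

Lemma dpairPr (a : R) (u w x : V) : dpair x (a *: u + w) = a * dpair x u + dpair x w.
Proof. by rewrite dpairC dpairPl !(dpairC x). Qed.

Lemma dpair0l (x : V) : dpair 0 x = 0.
Proof. by rewrite /dpair big1 // => i _; rewrite mxE mul0r. Qed.

Lemma dpairBr (x u w : V) : dpair x (u - w) = dpair x u - dpair x w.
Proof. by rewrite addrC -scaleN1r dpairPr mulN1r addrC. Qed.

Lemma dpair_repr (g : V -> R) : lin_fun g -> exists xi : V, forall w, dpair xi w = g w.
Proof.
move=> lin_g; exists (\row_i g (delta_mx 0 i)) => w.
rewrite {2}(row_sum_delta w).
rewrite [X in g X](_ : _ = \sum_(j <- index_enum 'I_n) w 0 j *: delta_mx 0 j) //.
by rewrite lin_fun_sum //; apply: eq_bigr => i _; rewrite mxE mulrC.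
Qed.

Lemma dpair_repr_on (U : {vspace V}) (f : V -> R) :
  (forall a u w, u \in U -> w \in U -> f (a *: u + w) = a * f u + f w) ->
  exists xi : V, forall w, w \in U -> dpair xi w = f w.
Proof.
move=> lin_f; have [xi Hxi] : exists xi : V, forall w, dpair xi w = f (projv U w).
  by apply: dpair_repr => a u w; rewrite linearP /=; apply: lin_f; exact: memv_proj.
by exists xi => w wU; rewrite Hxi projv_id.
Qed.

Lemma memv_annihilator (U : {vspace V}) (x : V) :
  (forall xi : V, (forall w, w \in U -> dpair xi w = 0) -> dpair xi x = 0) -> x \in U.
Proof.
move=> annU; set y := x - projv U x.
have [/eqP|/eqP yn0] := eqVneq y 0; first by rewrite subr_eq0 => /eqP ->; exact: memv_proj.
have [i yi] : exists i, y 0 i != 0.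
  case: (pickP (fun i => y 0 i != 0)) => [i yi|y0]; first by exists i.
  exfalso; apply: yn0; apply/rowP => j; rewrite [RHS]mxE; move: (y0 j) => /=; by case: eqP.
have [xi Hxi] : exists xi : V, forall w, dpair xi w = (w - projv U w) 0 i.
  apply: dpair_repr => a u w; rewrite linearP /= !mxE.
  by rewrite opprD addrACA -mulrBr.
move: yi; rewrite -[y 0 i]Hxi annU ?eqxx // => w wU.
by rewrite Hxi projv_id // subrr mxE.
Qed.

(* The b.1 run through a basis of S and the b.2 are the projections onto P of
   its dual basis; Ann(P) <= S makes these projections invisible to S. *)
Lemma dual_frame (S P : {vspace V}) :
  (forall xi, (forall w, w \in P -> dpair xi w = 0) -> xi \in S) ->
  exists B : seq (V * V), (forall b, b \in B -> b.1 \in S /\ b.2 \in P) /\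
    (forall u, u \in P -> forall xi, xi \in S ->
      dpair xi (u - \sum_(b <- B) dpair b.1 u *: b.2) = 0).
Proof.
move=> annP_S; set X := vbasis S.
have [e He] : exists e : 'I_(\dim S) -> V, forall a w, dpair (e a) w = coord X a w.
  have [f Hf] := boolp.choice (fun a => dpair_repr (fun c u w => linearP (coord X a) c u w)).
  by exists f.
exists [seq (X`_a, projv P (e a)) | a : 'I_(\dim S) <- index_enum 'I_(\dim S)]; split.
  move=> b /mapP [a _ ->] /=; split; last exact: memv_proj.
  by apply: vbasis_mem; apply: mem_nth; rewrite size_tuple.
move=> u uP xi xiS.
set y := \sum_(a < \dim S) dpair X`_a u *: e a.
have Hy z : z \in S -> dpair z y = dpair z u.
  move=> zS; rewrite (lin_fun_sum (g := dpair z)); last by move=> *; rewrite dpairPr.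
  rewrite [in RHS](coord_vbasis zS) (lin_fun_sum (g := fun x => dpair x u)); last first.
    by move=> *; rewrite dpairPl.
  by apply: eq_bigr => a _; rewrite (dpairC z) He mulrC.
have uyP : u - y \in P.
  by apply: memv_annihilator => z /annP_S zS; rewrite dpairBr Hy ?subrr.
have yP : y \in P by rewrite -[y](subKr u) memvB.
rewrite big_map (_ : \sum_(j <- _) _ = y) ?dpairBr ?Hy ?subrr //.
by rewrite -(projv_id yP) /y linear_sum; apply: eq_bigr => a _; rewrite linearZ.
Qed.

End DualPairing.

Section Forms.
Variables (R : realType) (n : nat).
Local Notation V := 'rV[R]_n.

Lemma in_sub_cat (U : {vspace V}) (l r : seq V) :
  in_sub U (l ++ r) = in_sub U l && in_sub U r.
Proof. exact: all_cat. Qed.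

Lemma in_sub_cons (U : {vspace V}) (a : V) (l : seq V) :
  in_sub U (a :: l) = (a \in U) && in_sub U l.
Proof. by []. Qed.

Lemma in_sub_rcons (U : {vspace V}) (a : V) (l : seq V) :
  in_sub U (rcons l a) = (a \in U) && in_sub U l.
Proof. exact: all_rcons. Qed.

Lemma in_sub_nth (U : {vspace V}) (l : seq V) i :
  in_sub U l -> (i < size l)%N -> nth 0 l i \in U.
Proof. by move=> lU lt_il; apply: (allP lU); rewrite mem_nth. Qed.

Lemma in_sub_take (U : {vspace V}) (l : seq V) j : in_sub U l -> in_sub U (take j l).
Proof. by move=> lU; apply/allP => x /mem_take; apply: (allP lU). Qed.

Lemma in_sub_drop (U : {vspace V}) (l : seq V) j : in_sub U l -> in_sub U (drop j l).
Proof. by move=> lU; apply/allP => x /mem_drop; apply: (allP lU). Qed.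

Lemma in_sub_omit (U : {vspace V}) (l : seq V) j : in_sub U l -> in_sub U (omit j l).
Proof. by move=> lU; rewrite in_sub_cat in_sub_take ?in_sub_drop. Qed.

Section KForm.
Variables (U : {vspace V}) (N : nat) (F : seq V -> R).
Hypothesis HF : kform_on U N F.

Lemma kform_lin (l r : seq V) (a : R) (u w : V) :
  (size l + size r).+1 = N -> in_sub U l -> in_sub U r -> u \in U -> w \in U ->
  F (l ++ (a *: u + w) :: r) = a * F (l ++ u :: r) + F (l ++ w :: r).
Proof. exact: HF.1. Qed.

Lemma kform0 (l r : seq V) :
  (size l + size r).+1 = N -> in_sub U l -> in_sub U r -> F (l ++ 0 :: r) = 0.
Proof.
move=> szN lU rU; have := kform_lin (-1) szN lU rU (mem0v U) (mem0v U).
by rewrite scaler0 addr0 mulN1r addNr.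
Qed.

Lemma kformD (l r : seq V) (u w : V) :
  (size l + size r).+1 = N -> in_sub U l -> in_sub U r -> u \in U -> w \in U ->
  F (l ++ (u + w) :: r) = F (l ++ u :: r) + F (l ++ w :: r).
Proof. by move=> *; rewrite -{1}[u]scale1r kform_lin // mul1r. Qed.

Lemma kform_dup (l r : seq V) (x : V) :
  (size l + size r).+2 = N -> in_sub U l -> in_sub U r -> x \in U ->
  F (l ++ x :: x :: r) = 0.
Proof.
move=> szN lU rU xU; apply: (HF.2 _ _ _ (size l) (size l).+1).
- by rewrite size_cat /=; lia.
- by rewrite in_sub_cat lU !in_sub_cons xU rU.
- by apply/andP; split=> //; lia.
- by rewrite !nth_cat ltnn subnn /= ltnNge leqnSn /= subSnn.
Qed.

Lemma kform_swap (l r : seq V) (a b : V) :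
  (size l + size r).+2 = N -> in_sub U l -> in_sub U r -> a \in U -> b \in U ->
  F (l ++ a :: b :: r) = - F (l ++ b :: a :: r).
Proof.
move=> szN lU rU aU bU; have abU : a + b \in U by rewrite memvD.
have sz1 : (size l + size (a + b :: r)).+1 = N by rewrite /= addnS.
have sz2 x : (size (rcons l x) + size r).+1 = N by rewrite size_rcons addSn.
have := kform_dup szN lU rU abU.
rewrite (kformD (r := a + b :: r)) //=; last by rewrite abU.
rewrite -[l ++ a :: _]cat_rcons -[l ++ b :: _]cat_rcons.
rewrite !(kformD (l := rcons _ _)) ?in_sub_rcons ?aU ?bU ?lU //.
rewrite !cat_rcons !kform_dup // add0r addr0 => /eqP; by rewrite addr_eq0 => /eqP.
Qed.

Lemma kform_move_front (l : seq V) (a : V) (r : seq V) :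
  (size l + size r).+1 = N -> in_sub U l -> a \in U -> in_sub U r ->
  F (l ++ a :: r) = (-1) ^+ (size l) * F (a :: l ++ r).
Proof.
elim/last_ind: l r => [|l x IH] r szN; first by rewrite expr0 mul1r.
rewrite in_sub_rcons => /andP [xU lU] aU rU; rewrite size_rcons in szN.
rewrite cat_rcons kform_swap ?IH //= ?xU //; try lia.
by rewrite cat_rcons size_rcons exprS mulN1r mulNr.
Qed.

Lemma kform_rcons (l : seq V) (a : V) :
  (size l).+1 = N -> in_sub U l -> a \in U -> F (rcons l a) = (-1) ^+ (size l) * F (a :: l).
Proof. by move=> *; rewrite -cats1 kform_move_front ?cats0 ?addn0. Qed.

Lemma kform_sum_head (I : eqType) (s : seq I) (c : I -> R) (e : I -> V) (r : seq V) :
  (size r).+1 = N -> in_sub U r -> (forall i, i \in s -> e i \in U) ->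
  F ((\sum_(i <- s) c i *: e i) :: r) = \sum_(i <- s) c i * F (e i :: r).
Proof.
move=> szN rU; elim: s => [|i s IH] eU; first by rewrite !big_nil (kform0 (l := [::])).
have sU : \sum_(j <- s) c j *: e j \in U.
  by rewrite big_seq memv_suml // => j js; rewrite memvZ // eU // inE js orbT.
rewrite !big_cons (kform_lin (l := [::])) ?eU ?mem_head //= IH // => j js.
by rewrite eU // inE js orbT.
Qed.

Lemma kform_expand_front (us : seq V) :
  (0 < N)%N -> size us = N -> in_sub U us ->
  F us = N%:R^-1 * \sum_(j < N) (-1) ^+ j * F (nth 0 us j :: omit j us).
Proof.
move=> N_gt0 szN usU.
have front (j : 'I_N) : (-1) ^+ j * F (nth 0 us j :: omit j us) = F us.
  have lt_j : (j < size us)%N by rewrite szN.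
  rewrite -[in RHS](cat_take_drop j us) (drop_nth 0 lt_j).
  rewrite kform_move_front ?size_takel ?(ltnW lt_j) //.
  - by rewrite size_drop; lia.
  - exact: in_sub_take.
  - exact: in_sub_nth.
  - exact: in_sub_drop.
rewrite (eq_bigr _ (fun j _ => front j)) sumr_const card_ord -[F us *+ N]mulr_natl mulrA.
by rewrite mulVf ?mul1r // pnatr_eq0 -lt0n.
Qed.

End KForm.

Lemma kform_cons (U : {vspace V}) m (G : seq V -> R) x :
  kform_on U m.+1 G -> x \in U -> kform_on U m (fun l => G (x :: l)).
Proof.
move=> [linG altG] xU; split.
  by move=> l r a u w szm lU *; apply: (linG (x :: l)) => //=; [lia | rewrite xU].
move=> vs szm vsU i j /andP [ij jm] eq_ij.
by apply: (altG (x :: vs) _ _ i.+1 j.+1) => //=; rewrite ?szm ?xU // !ltnS ij.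
Qed.

Lemma nth_map_dpair (xs : seq V) a y :
  nth (fun _ => 0) (map (@dpair R n) xs) a y = dpair (nth 0 xs a) y.
Proof.
case: (ltnP a (size xs)) => h; first by rewrite (nth_map 0).
by rewrite !nth_default ?size_map // dpair0l.
Qed.

Lemma wedge1_0 (fs : seq (V -> R)) (us : seq V) : wedge1 0 fs us = 1.
Proof. exact: det_mx00. Qed.

Lemma eq_wedge1 k (fs gs : seq (V -> R)) (us : seq V) :
  (forall a b, (a < k)%N -> (b < k)%N ->
     nth (fun _ => 0) fs a (nth 0 us b) = nth (fun _ => 0) gs a (nth 0 us b)) ->
  wedge1 k fs us = wedge1 k gs us.
Proof. by move=> fg; congr (\det _); apply/matrixP => a b; rewrite !mxE fg. Qed.

Lemma wedge1_expand k (f : V -> R) (fs : seq (V -> R)) (us : seq V) :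
  wedge1 k.+1 (f :: fs) us =
  \sum_(j < k.+1) (-1) ^+ j * f (nth 0 us j) * wedge1 k fs (omit j us).
Proof.
rewrite /wedge1 (expand_det_row _ ord0); apply: eq_bigr => j _.
rewrite !mxE /cofactor add0n /= mulrCA mulrA; congr (_ * \det _).
by apply/matrixP => a b; rewrite !mxE lift0 /= nth_omit.
Qed.

Lemma wedge1_lin k (fs1 fs2 : seq (V -> R)) (f g h : V -> R) (a : R) us :
  (size fs1 < k)%N -> (forall x, h x = a * f x + g x) ->
  wedge1 k (fs1 ++ h :: fs2) us =
  a * wedge1 k (fs1 ++ f :: fs2) us + wedge1 k (fs1 ++ g :: fs2) us.
Proof.
move=> lt_k hfg; rewrite /wedge1 -[X in _ = _ + X]mul1r.
have other_rows (e : V -> R) (i : 'I_k.-1) b :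
    nth (fun _ => 0) (fs1 ++ e :: fs2) (lift (Ordinal lt_k) i) b
    = nth (fun _ => 0) (fs1 ++ h :: fs2) (lift (Ordinal lt_k) i) b.
  rewrite !nth_cat; case: ltnP => // hl.
  have : (lift (Ordinal lt_k) i : nat) != size fs1 by rewrite /= eq_sym neq_bump.
  by case E: (_ - size fs1)%N => [|m] //; rewrite eqn_leq hl andbT -subn_eq0 E.
apply: (determinant_multilinear (i0 := Ordinal lt_k)).
- by apply/rowP => b; rewrite !mxE /= !nth_cat ltnn subnn /= hfg mul1r.
- by apply/matrixP => i b; rewrite !mxE other_rows.
- by apply/matrixP => i b; rewrite !mxE other_rows.
Qed.

Lemma wedge1_alt k (fs : seq (V -> R)) us (i j : 'I_k) :
  i != j -> (forall x, nth (fun _ => 0) fs i x = nth (fun _ => 0) fs j x) ->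
  wedge1 k fs us = 0.
Proof. by move=> ij fij; apply: (determinant_alternate ij) => b; rewrite !mxE fij. Qed.

Lemma wedge1_dpairC k (xs ys : seq V) :
  wedge1 k (map (@dpair R n) xs) ys = wedge1 k (map (@dpair R n) ys) xs.
Proof.
rewrite /wedge1 -det_tr; congr (\det _); apply/matrixP => a b.
by rewrite !mxE !nth_map_dpair dpairC.
Qed.

Lemma mvec_in_cat (U : {vspace V}) k (Z1 Z2 : mvec R n) :
  mvec_in U k (Z1 ++ Z2) = mvec_in U k Z1 && mvec_in U k Z2.
Proof. exact: all_cat. Qed.

Lemma mvec_in_scale (U : {vspace V}) k (Z : mvec R n) a :
  mvec_in U k [seq (a * c.1, c.2) | c <- Z] = mvec_in U k Z.
Proof. by rewrite /mvec_in all_map. Qed.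

Lemma contr_cat (Z1 Z2 : mvec R n) F x : contr (Z1 ++ Z2) F x = contr Z1 F x + contr Z2 F x.
Proof. by rewrite /contr big_cat. Qed.

Lemma contr_scale (Z : mvec R n) a F x :
  contr [seq (a * c.1, c.2) | c <- Z] F x = a * contr Z F x.
Proof. by rewrite /contr big_map mulr_sumr; apply: eq_bigr => c _; rewrite mulrA. Qed.

End Forms.

Section Lperp.
Variables (R : realType) (n k : nat).
Local Notation V := 'rV[R]_n.
Local Notation mv := (mvec R n).
Variables (P : {vspace V}) (Om : seq V -> R).
Hypothesis HOm : kform_on P k.+1 Om.

Lemma contr_lin (Z : mv) a u w : mvec_in P k Z -> u \in P -> w \in P ->
  contr Z Om (a *: u + w) = a * contr Z Om u + contr Z Om w.
Proof.
move=> ZP uP wP; rewrite /contr mulr_sumr -big_split /= big_seq [RHS]big_seq.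
apply: eq_bigr => c cZ; have /andP [/eqP szc cP] := allP ZP c cZ.
by rewrite -!cats1 (kform_lin HOm (l := c.2) (r := [::])) /= ?addn0 ?szc // mulrDr mulrCA.
Qed.

Lemma in_Lperp_exists (Z : mv) : mvec_in P k Z -> exists eta, in_Lperp k.+1 P Om Z eta.
Proof.
move=> ZP; have [xi Hxi] := dpair_repr_on (fun a u w uP wP => contr_lin a ZP uP wP).
by exists xi; split => // w wP; rewrite Hxi.
Qed.

Lemma Lperp_projection :
  exists S : {vspace V}, forall eta, eta \in S <-> exists Z, in_Lperp k.+1 P Om Z eta.
Proof.
apply: closed_pred_vspace.
  by exists [::]; split => // w wP; rewrite /contr big_nil dpair0l.
move=> a u w [Z1 [Z1P Z1u]] [Z2 [Z2P Z2w]].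
exists ([seq (a * c.1, c.2) | c <- Z1] ++ Z2); split.
  by rewrite mvec_in_cat mvec_in_scale Z1P Z2P.
by move=> x xP; rewrite contr_cat contr_scale Z1u // Z2w // dpairPl.
Qed.

Variable S : {vspace V}.
Hypothesis HS : forall eta, eta \in S <-> exists Z, in_Lperp k.+1 P Om Z eta.

Lemma in_Lperp_mem (Z : mv) eta : in_Lperp k.+1 P Om Z eta -> eta \in S.
Proof. by move=> HZ; apply/HS; exists Z. Qed.

Lemma Om_cons_annihilated (r : V) : r \in P -> (forall xi, xi \in S -> dpair xi r = 0) ->
  forall l, size l = k -> in_sub P l -> Om (r :: l) = 0.
Proof.
move=> rP Sr l szl lP.
have lP' : mvec_in P k [:: (1, l)] by rewrite /mvec_in /= szl eqxx lP.
have [eta Heta] := in_Lperp_exists lP'.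
have := Sr eta (in_Lperp_mem Heta).
rewrite -Heta.2 // /contr big_cons big_nil addr0 mul1r /= (kform_rcons HOm) ?szl //.
by move=> /eqP; rewrite mulf_eq0 signr_eq0 => /eqP.
Qed.

Lemma in_Lperp_family (xs : seq V) : in_sub S xs -> exists Zs : seq mv,
  [/\ size Zs = size xs, all (mvec_in P k) Zs &
   forall i, (i < size xs)%N -> forall w, w \in P ->
     contr (nth [::] Zs i) Om w = dpair (nth 0 xs i) w].
Proof.
elim: xs => [|x xs IH]; first by exists [::].
rewrite in_sub_cons => /andP [/HS [Z [ZP Zx]] /IH [Zs [szZs ZsP HZs]]].
exists (Z :: Zs); split; [by rewrite /= szZs | by rewrite /= ZP | ].
by case=> [|i] /= lt_i w wP; [exact: Zx | exact: HZs].
Qed.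

Hypothesis HH : condH k.+1 P Om.

Lemma wedge_dpair_repr (xs : seq V) : in_sub S xs -> size xs = k -> exists v, v \in P /\
  forall us, size us = k -> in_sub P us -> wedge1 k (map (@dpair R n) xs) us = Om (v :: us).
Proof.
move=> xsS szxs; have [Zs [szZs ZsP HZs]] := in_Lperp_family xsS; rewrite szxs in szZs.
have [v [vP Hv]] := HH szZs ZsP.
exists v; split => // us szus usP; rewrite -Hv //; apply: eq_wedge1 => i j lt_i lt_j.
rewrite nth_map_dpair (nth_map [::]) ?szZs // HZs ?szxs //.
by apply: in_sub_nth; rewrite ?szus.
Qed.

Lemma mvec_wedge_repr (W : mv) : mvec_in S k W -> exists v, v \in P /\
  forall us, size us = k -> in_sub P us ->
    \sum_(c <- W) c.1 * wedge1 k (map (@dpair R n) c.2) us = Om (v :: us).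
Proof.
elim: W => [|c W IH].
  exists 0; split=> [|us szus usP]; first exact: mem0v.
  by rewrite big_nil (kform0 HOm (l := [::])) //= szus.
move=> /andP [/andP [/eqP szc cS] /IH [vW [vWP HvW]]].
have [vc [vcP Hvc]] := wedge_dpair_repr cS szc.
exists (c.1 *: vc + vW); split=> [|us szus usP]; first by rewrite memvD ?memvZ.
by rewrite big_cons Hvc // HvW // (kform_lin HOm (l := [::])) //= szus.
Qed.

(* Both sides compute Om(Z, v): the left one through (H), the right one
   through i_Z Om = eta. *)
Lemma mpair_in_Lperp (Z : mv) eta (xs : seq V) v :
  in_Lperp k.+1 P Om Z eta -> v \in P ->
  (forall us, size us = k -> in_sub P us ->
     wedge1 k (map (@dpair R n) xs) us = Om (v :: us)) ->
  mpair k Z xs = (-1) ^+ k * dpair eta v.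
Proof.
move=> [ZP Zeta] vP Hv; rewrite -Zeta // /contr /mpair mulr_sumr big_seq [RHS]big_seq.
apply: eq_bigr => c cZ; have /andP [/eqP szc cP] := allP ZP c cZ.
by rewrite (kform_rcons HOm) ?szc // Hv // mulrCA signrMK.
Qed.

Lemma mpair_in_Lperp_eq (Z1 Z2 : mv) eta (xs : seq V) :
  in_Lperp k.+1 P Om Z1 eta -> in_Lperp k.+1 P Om Z2 eta ->
  in_sub S xs -> size xs = k -> mpair k Z1 xs = mpair k Z2 xs.
Proof.
move=> HZ1 HZ2 xsS szxs; have [v [vP Hv]] := wedge_dpair_repr xsS szxs.
by rewrite (mpair_in_Lperp HZ1 vP Hv) (mpair_in_Lperp HZ2 vP Hv).
Qed.

(* Expanding the determinant with eta repeated gives eta(v) * Om(v, _) = 0,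
   and eta(v) is itself a value of Om(v, _) by the definition of L^perp. *)
Lemma dpair_wedge_repr_nth (xs : seq V) v j :
  in_sub S xs -> size xs = k -> (j < k)%N -> v \in P ->
  (forall us, size us = k -> in_sub P us ->
     wedge1 k (map (@dpair R n) xs) us = Om (v :: us)) ->
  dpair (nth 0 xs j) v = 0.
Proof.
move=> xsS szxs lt_jk vP Hv; set eta := nth 0 xs j; set d := dpair eta v.
have dOm c2 : size c2 = k -> in_sub P c2 -> d * Om (v :: c2) = 0.
  move=> szc2 c2P; rewrite -Hv //.
  have := @wedge1_alt _ _ k.+1 (dpair eta :: map (@dpair R n) xs) (v :: c2)
    ord0 (Ordinal (lt_jk : j.+1 < k.+1)%N) isT (fun x => esym (nth_map_dpair xs j x)).
  rewrite wedge1_expand big_ord_recl big1 => [|i _].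
    by rewrite addr0 expr0 mul1r /omit /= drop0 => dv0; exact dv0.
  have k_gt0 : (0 < k)%N by apply: leq_ltn_trans (ltn_ord i).
  have szo : size (omit i c2) = k.-1 by rewrite size_omit ?szc2.
  rewrite lift0 omit_cons (Hv (v :: omit i c2)) /= ?szo ?prednK ?vP ?in_sub_omit //.
  by rewrite (kform_dup HOm (l := [::])) ?mulr0 ?in_sub_omit //= add0n szo prednK.
have [Z [ZP Zeta]] : exists Z, in_Lperp k.+1 P Om Z eta by apply/HS/in_sub_nth; rewrite ?szxs.
apply/eqP; rewrite -[d == 0]orbb -mulf_eq0; apply/eqP.
rewrite {2}/d -Zeta // /contr mulr_sumr big_seq big1 // => c cZ.
have /andP [/eqP szc cP] := allP ZP c cZ.
by rewrite (kform_rcons HOm) ?szc // [d * _]mulrCA [d * _]mulrCA dOm ?mulr0.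
Qed.

Section AssignedForm.
Variable Pi : seq V -> R.
Hypothesis hPi : forall (Z : mv) eta, in_Lperp k.+1 P Om Z eta ->
  forall xs, size xs = k -> in_sub S xs -> Pi (eta :: xs) = mpair k Z xs.

Lemma assoc_form_head eta xs v :
  eta \in S -> in_sub S xs -> size xs = k -> v \in P ->
  (forall us, size us = k -> in_sub P us ->
     wedge1 k (map (@dpair R n) xs) us = Om (v :: us)) ->
  Pi (eta :: xs) = (-1) ^+ k * dpair eta v.
Proof. by move=> /HS [Z HZ] xsS szxs vP Hv; rewrite (hPi HZ) // (mpair_in_Lperp HZ vP Hv). Qed.

Lemma assoc_form_lin : multilinear_on S k.+1 Pi.
Proof.
move=> [|eta l] r a u w /= szk lS rS uS wS.
  have szr : size r = k by lia.
  have [v [vP Hv]] := wedge_dpair_repr rS szr.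
  by rewrite !(assoc_form_head _ rS szr vP Hv) ?memvD ?memvZ // dpairPl mulrDr mulrCA.
move: lS => /andP [/HS [Z HZ] lS].
have szo x : size (l ++ x :: r) = k by rewrite size_cat /=; lia.
have inS x : x \in S -> in_sub S (l ++ x :: r).
  by move=> xS; rewrite in_sub_cat lS in_sub_cons xS rS.
rewrite !(hPi HZ) ?szo ?inS ?memvD ?memvZ // /mpair mulr_sumr -big_split /=.
apply: eq_bigr => c _; rewrite !map_cat /=.
rewrite (wedge1_lin (fs1 := map (@dpair R n) l) (f := dpair u) (g := dpair w)
  (h := dpair (a *: u + w)) (a := a) (map (@dpair R n) r) c.2).
- by rewrite mulrDr mulrCA.
- by rewrite size_map; lia.
- by move=> x; rewrite dpairPl.
Qed.

Lemma assoc_form_alt : alternating_on S k.+1 Pi.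
Proof.
move=> [|eta xs] // [szk]; rewrite in_sub_cons => /andP [etaS xsS] [|i] [|j] //.
  rewrite ltnS => /andP [_ lt_jk] /= eta_j.
  have [v [vP Hv]] := wedge_dpair_repr xsS szk.
  rewrite (assoc_form_head etaS xsS szk vP Hv) eta_j.
  by rewrite (dpair_wedge_repr_nth xsS szk lt_jk vP Hv) mulr0.
rewrite !ltnS => /andP [lt_ij lt_jk] /= eq_ij.
have [Z HZ] := (HS eta).1 etaS.
rewrite (hPi HZ) // /mpair big1 // => c _.
rewrite (@wedge1_alt _ _ k _ _ (Ordinal (ltn_trans lt_ij lt_jk)) (Ordinal lt_jk)) ?mulr0 //.
  by rewrite -val_eqE /= neq_ltn lt_ij.
by move=> x; rewrite !nth_map_dpair eq_ij.
Qed.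

Lemma assoc_form_kform : kform_on S k.+1 Pi.
Proof. exact: conj assoc_form_lin assoc_form_alt. Qed.

(* Exchanging the two sums, both sides become i_Z Om (v) for a partner (Z, xi). *)
Lemma contr_assoc_form (W : mv) v : mvec_in S k W -> v \in P ->
  (forall us, size us = k -> in_sub P us ->
    \sum_(c <- W) c.1 * wedge1 k (map (@dpair R n) c.2) us = Om (v :: us)) ->
  forall xi, xi \in S -> contr W Pi xi = dpair xi v.
Proof.
move=> WS vP Hv xi /HS [Z [ZP Zxi]]; rewrite -(Zxi v vP) /contr.
have -> : \sum_(c <- W) c.1 * Pi (rcons c.2 xi) =
          (-1) ^+ k * \sum_(c <- W) c.1 * mpair k Z c.2.
  rewrite mulr_sumr big_seq [RHS]big_seq; apply: eq_bigr => c cW.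
  have /andP [/eqP szc cS] := allP WS c cW.
  rewrite (kform_rcons assoc_form_kform) ?szc ?(hPi (conj ZP Zxi)) //; first exact: mulrCA.
  by apply/HS; exists Z.
have -> : \sum_(c <- W) c.1 * mpair k Z c.2 = \sum_(d <- Z) d.1 * Om (v :: d.2).
  rewrite /mpair; under eq_bigr do rewrite mulr_sumr.
  rewrite exchange_big /= big_seq [RHS]big_seq; apply: eq_bigr => d dZ.
  have /andP [/eqP szd dP] := allP ZP d dZ.
  by rewrite -Hv // mulr_sumr; apply: eq_bigr => c _; rewrite mulrCA.
rewrite mulr_sumr big_seq [RHS]big_seq; apply: eq_bigr => d dZ.
have /andP [/eqP szd dP] := allP ZP d dZ.
by rewrite (kform_rcons HOm) ?szd // mulrCA.
Qed.

Lemma assoc_form_condH' : condH' k.+1 S Pi.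
Proof.
move=> ws szws wsS.
have [vs [szvs vsP Hvs]] : exists vs : seq V, [/\ size vs = size ws, in_sub P vs &
    forall i, (i < size ws)%N -> forall xi, xi \in S ->
      contr (nth [::] ws i) Pi xi = dpair xi (nth 0 vs i)].
  elim: ws {szws} wsS => [|w ws IH]; first by exists [::].
  move=> /andP [wS /IH [vs [szvs vsP Hvs]]].
  have [v [vP Hv]] := mvec_wedge_repr wS.
  exists (v :: vs); split; [by rewrite /= szvs | by rewrite in_sub_cons vP | ].
  by case=> [|i] /= lt_i xi xiS; [exact: contr_assoc_form | exact: Hvs].
have vsP' : mvec_in P k [:: (1, vs)] by rewrite /mvec_in /= andbT szvs szws eqxx.
have [eta Heta] := in_Lperp_exists vsP'.
exists eta; split=> [|xs szxs xsS]; first exact: in_Lperp_mem Heta.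
rewrite (hPi Heta) // /mpair big_cons big_nil addr0 mul1r -wedge1_dpairC.
apply: eq_wedge1 => a b lt_a lt_b.
rewrite nth_map_dpair (nth_map [::]) ?szws // Hvs ?szws // 1?dpairC //.
by apply: in_sub_nth; rewrite ?szxs.
Qed.

End AssignedForm.

Lemma assoc_form_exists : exists Pi : seq V -> R,
  forall (Z : mv) eta, in_Lperp k.+1 P Om Z eta ->
    forall xs, size xs = k -> in_sub S xs -> Pi (eta :: xs) = mpair k Z xs.
Proof.
have [Zof HZof] : exists Zof : V -> mv,
    forall eta, eta \in S -> in_Lperp k.+1 P Om (Zof eta) eta.
  have partner eta : exists Z : mv, eta \in S -> in_Lperp k.+1 P Om Z eta.
    by case: (boolP (eta \in S)) => [/HS [Z HZ]|notS]; [exists Z | by exists [::] => /negP].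
  by have [f Hf] := boolp.choice partner; exists f.
exists (fun vs => if vs is eta :: xs then mpair k (Zof eta) xs else 0).
move=> Z eta HZ xs szxs xsS.
exact: mpair_in_Lperp_eq (HZof _ (in_Lperp_mem HZ)) HZ xsS szxs.
Qed.

End Lperp.

Lemma assoc_exists (R : realType) (n k : nat) (P : {vspace 'rV[R]_n}) (Om : seq 'rV[R]_n -> R) :
  linear_dirac k.+1 P Om -> exists S Pi, assoc k.+1 P Om S Pi.
Proof.
move=> [HOm HH]; have [S HS] := @Lperp_projection R n k P Om.
by have [Pi hPi] := assoc_form_exists HOm HS HH; exists S, Pi.
Qed.

Lemma assoc_dual_pair (R : realType) (n k : nat) (P S : {vspace 'rV[R]_n})
    (Om Pi : seq 'rV[R]_n -> R) :
  linear_dirac k.+1 P Om -> assoc k.+1 P Om S Pi -> dual_pair k.+1 S Pi.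
Proof.
move=> [HOm HH] [HS hPi].
split; [exact: (assoc_form_kform HOm HS HH hPi) | exact: (assoc_form_condH' HOm HS HH hPi)].
Qed.

Section FrameRepr.
Variables (R : realType) (n : nat).
Local Notation V := 'rV[R]_n.
Local Notation mv := (mvec R n).
Variables (S P : {vspace V}) (B : seq (V * V)).
Hypothesis B_in : forall b, b \in B -> b.1 \in S /\ b.2 \in P.
Hypothesis B_frame : forall u, u \in P -> forall xi, xi \in S ->
  dpair xi (u - \sum_(b <- B) dpair b.1 u *: b.2) = 0.

Definition kills_annihilator (m : nat) (G : seq V -> R) : Prop :=
  forall r rest, r \in P -> (forall xi, xi \in S -> dpair xi r = 0) ->
    (size rest).+1 = m -> in_sub P rest -> G (r :: rest) = 0.

Lemma kills_annihilator_cons m (G : seq V -> R) x :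
  kform_on P m.+1 G -> kills_annihilator m.+1 G -> x \in P ->
  kills_annihilator m (fun l => G (x :: l)).
Proof.
move=> HG killG xP r rest rP Sr szr restP.
have xrestP : in_sub P (x :: rest) by rewrite in_sub_cons xP.
rewrite (kform_swap HG (l := [::])) /= ?szr //.
by rewrite (killG r (x :: rest)) ?oppr0 //= szr.
Qed.

Lemma kform_head_frame m (G : seq V -> R) u rest :
  kform_on P m.+1 G -> kills_annihilator m.+1 G ->
  u \in P -> size rest = m -> in_sub P rest ->
  G (u :: rest) = \sum_(b <- B) dpair b.1 u * G (b.2 :: rest).
Proof.
move=> HG killG uP szr restP.
set s := \sum_(b <- B) dpair b.1 u *: b.2.
have sP : s \in P by rewrite /s big_seq memv_suml // => b bB; rewrite memvZ // (B_in bB).2.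
rewrite [in LHS](_ : u = s + (u - s)); last by rewrite addrC subrK.
rewrite (kformD HG (l := [::])) ?memvB //= ?szr //.
rewrite (killG (u - s)) ?memvB ?szr ?addr0 //; last first.
  by move=> xi xiS; apply: B_frame.
by rewrite (kform_sum_head HG) ?szr // => b bB; exact: (B_in bB).2.
Qed.

(* Expand one argument along the frame and recurse on the other m - 1,
   averaging over which argument is expanded. *)
Lemma kform_frame_repr m (G : seq V -> R) :
  kform_on P m G -> kills_annihilator m G ->
  exists W : mv, mvec_in S m W /\ forall us, size us = m -> in_sub P us ->
    \sum_(c <- W) c.1 * wedge1 m (map (@dpair R n) c.2) us = G us.
Proof.
elim: m G => [|m IH] G HG killG.
  exists [:: (G [::], [::])]; split=> // [[|//]] _ _.
  by rewrite big_cons big_nil wedge1_0 mulr1 addr0.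
have [Wf HWf] : exists Wf : V * V -> mv, forall b, b \in B ->
    mvec_in S m (Wf b) /\ forall us, size us = m -> in_sub P us ->
      \sum_(c <- Wf b) c.1 * wedge1 m (map (@dpair R n) c.2) us = G (b.2 :: us).
  have Wb b : exists W : mv, b \in B -> mvec_in S m W /\ forall us, size us = m ->
      in_sub P us -> \sum_(c <- W) c.1 * wedge1 m (map (@dpair R n) c.2) us = G (b.2 :: us).
    case: (boolP (b \in B)) => [bB|]; last by exists [::] => /negP.
    have [W HW] := IH _ (kform_cons HG (B_in bB).2) (kills_annihilator_cons HG killG (B_in bB).2).
    by exists W.
  by have [f Hf] := boolp.choice Wb; exists f.
exists (flatten [seq [seq (c.1 / m.+1%:R, b.1 :: c.2) | c <- Wf b] | b <- B]); split.
  apply/allP => c /flatten_mapP [b bB /mapP [c' c'W ->]] /=.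
  have /andP [/eqP szc c'S] := allP (HWf b bB).1 c' c'W.
  by rewrite szc eqxx (B_in bB).1.
move=> us szus usP.
have expand_j (j : 'I_m.+1) : G (nth 0 us j :: omit j us) = \sum_(b <- B) dpair b.1 (nth 0 us j) *
    \sum_(c <- Wf b) c.1 * wedge1 m (map (@dpair R n) c.2) (omit j us).
  have lt_j : (j < size us)%N by rewrite szus.
  have szo : size (omit j us) = m by rewrite size_omit szus.
  rewrite (kform_head_frame HG) ?in_sub_nth ?in_sub_omit //.
  by apply: eq_big_seq => b bB; rewrite (HWf b bB).2 ?in_sub_omit.
rewrite [RHS](kform_expand_front HG) //.
under [in RHS]eq_bigr => j _ do rewrite expand_j.
rewrite big_flatten big_map.
under eq_bigr => b _ do rewrite big_map.
under eq_bigr => b _ do under eq_bigr => c _ do rewrite /= wedge1_expand mulr_sumr.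
under eq_bigr => b _ do rewrite exchange_big /=.
rewrite exchange_big /= mulr_sumr; apply: eq_bigr => j _.
rewrite [RHS]mulrA [RHS]mulr_sumr; apply: eq_bigr => b _.
rewrite [RHS]mulrA [RHS]mulr_sumr; apply: eq_bigr => c _.
by rewrite /=; ring.
Qed.

End FrameRepr.

Section Symmetry.
Variables (R : realType) (n k : nat).
Local Notation V := 'rV[R]_n.
Local Notation mv := (mvec R n).
Variables (P S : {vspace V}) (Om Pi : seq V -> R).
Hypothesis HOm : kform_on P k.+1 Om.
Hypothesis HH : condH k.+1 P Om.
Hypothesis HS : forall eta, eta \in S <-> exists Z, in_Lperp k.+1 P Om Z eta.
Hypothesis hPi : forall (Z : mv) eta, in_Lperp k.+1 P Om Z eta ->
  forall xs, size xs = k -> in_sub S xs -> Pi (eta :: xs) = mpair k Z xs.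

Lemma annihilator_sub (xi : V) : (forall w, w \in P -> dpair xi w = 0) -> xi \in S.
Proof. by move=> xiP; apply/HS; exists [::]; split=> // w wP; rewrite /contr big_nil xiP. Qed.

Lemma memv_annihilatorS (x : V) : (forall xi, xi \in S -> dpair xi x = 0) -> x \in P.
Proof. by move=> Sx; apply: memv_annihilator => xi /annihilator_sub; apply: Sx. Qed.

Lemma in_Lperp_sym_diff (W : mv) v vW : in_Lperp k.+1 S Pi W v -> vW \in P ->
  (forall us, size us = k -> in_sub P us ->
    \sum_(c <- W) c.1 * wedge1 k (map (@dpair R n) c.2) us = Om (vW :: us)) ->
  forall xi, xi \in S -> dpair xi (v - vW) = 0.
Proof.
move=> [WS Wv] vWP HvW xi xiS.
by rewrite dpairBr -(contr_assoc_form HOm HS HH hPi WS vWP HvW xiS) Wv // dpairC subrr.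
Qed.

Lemma memv_Lperp_sym (v : V) : v \in P <-> exists W, in_Lperp k.+1 S Pi W v.
Proof.
split=> [vP|[W HW]]; last first.
  have [vW [vWP HvW]] := mvec_wedge_repr HOm HS HH HW.1.
  rewrite -(subrK vW v) memvD //; apply: memv_annihilatorS.
  exact: in_Lperp_sym_diff HW vWP HvW.
have [B [B_in B_frame]] := dual_frame annihilator_sub.
have killOm : kills_annihilator S P k (fun l => Om (v :: l)).
  move=> r rest rP Sr szr restP.
  have vrestP : in_sub P (v :: rest) by rewrite in_sub_cons vP.
  rewrite (kform_swap HOm (l := [::])) /= ?szr //.
  by rewrite (Om_cons_annihilated HOm HS rP Sr) ?oppr0 //= szr.
have [W [WS HW]] := kform_frame_repr B_in B_frame (kform_cons HOm vP) killOm.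
exists W; split=> // xi xiS.
by rewrite (contr_assoc_form HOm HS HH hPi WS vP HW xiS) dpairC.
Qed.

Lemma assoc_sym_mpair (W : mv) v : in_Lperp k.+1 S Pi W v ->
  forall us, size us = k -> in_sub P us -> Om (v :: us) = mpair k W us.
Proof.
move=> HW us szus usP; have [vW [vWP HvW]] := mvec_wedge_repr HOm HS HH HW.1.
have vP : v \in P by apply/memv_Lperp_sym; exists W.
have Om0 : Om ((v - vW) :: us) = 0.
  by apply: (Om_cons_annihilated HOm HS _ (in_Lperp_sym_diff HW vWP HvW)); rewrite ?memvB.
have : Om (((-1) *: vW + v) :: us) = - Om (vW :: us) + Om (v :: us).
  by rewrite (kform_lin HOm (l := [::])) //= ?szus // mulN1r.
rewrite scaleN1r addrC Om0 => /eqP; rewrite eq_sym addrC subr_eq0 => /eqP ->.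
by rewrite /mpair -HvW //; apply: eq_bigr => c _; rewrite wedge1_dpairC.
Qed.

End Symmetry.

Lemma assoc_sym (R : realType) (n k : nat) (P S : {vspace 'rV[R]_n})
    (Om Pi : seq 'rV[R]_n -> R) :
  linear_dirac k.+1 P Om -> assoc k.+1 P Om S Pi -> assoc k.+1 S Pi P Om.
Proof.
move=> [HOm HH] [HS hPi].
by split; [exact: memv_Lperp_sym HOm HH HS hPi | exact: assoc_sym_mpair HOm HH HS hPi].
Qed.

Lemma assoc_unique (R : realType) (n k : nat) (P S S' : {vspace 'rV[R]_n})
    (Om Pi Pi' : seq 'rV[R]_n -> R) :
  assoc k.+1 P Om S Pi -> assoc k.+1 P Om S' Pi' -> S = S' /\ eq_on S k.+1 Pi Pi'.
Proof.
move=> [HS hPi] [HS' hPi'].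
have SS' : S = S' by apply/vspaceP => x; apply/idP/idP => [/HS|/HS'] xS; [apply/HS' | apply/HS].
split=> // [[|eta xs]] //= [szxs] /andP [/HS [Z HZ] xsS].
by rewrite (hPi _ _ HZ) ?(hPi' _ _ HZ) // -SS'.
Qed.

Lemma assoc_eq_on (R : realType) (n k : nat) (P S : {vspace 'rV[R]_n})
    (Om Om' Pi : seq 'rV[R]_n -> R) :
  eq_on P k.+1 Om Om' -> assoc k.+1 P Om' S Pi -> assoc k.+1 P Om S Pi.
Proof.
move=> OmOm' [HS hPi].
have Lperp_eq W v : in_Lperp k.+1 P Om W v <-> in_Lperp k.+1 P Om' W v.
  have contr_eq : mvec_in P k W -> forall w, w \in P -> contr W Om w = contr W Om' w.
    move=> WP w wP; rewrite /contr big_seq [RHS]big_seq; apply: eq_bigr => c cW.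
    have /andP [/eqP szc cP] := allP WP c cW.
    by rewrite OmOm' ?size_rcons ?szc ?in_sub_rcons ?wP.
  split=> [[WP Wv]|[WP Wv]]; split=> // w wP; first by rewrite -contr_eq ?Wv.
  by rewrite contr_eq ?Wv.
split=> [v|W v /Lperp_eq]; last exact: hPi.
by rewrite HS; split=> [[W /Lperp_eq]|[W /Lperp_eq]]; exists W.
Qed.

Theorem proposition4p5 (R : realType) (n p : nat) :
  (2 <= p <= n)%N ->
  (* the assignment is defined on Dirac structures and lands in pairs with (H') *)
  (forall (P : {vspace 'rV[R]_n}) (Om : seq 'rV[R]_n -> R),
     linear_dirac p P Om ->
     exists (S : {vspace 'rV[R]_n}) (Pi : seq 'rV[R]_n -> R),
       dual_pair p S Pi /\ assoc p P Om S Pi) /\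
  (* it is well defined (the assigned pair is unique) *)
  (forall (P : {vspace 'rV[R]_n}) (Om : seq 'rV[R]_n -> R)
          (S S' : {vspace 'rV[R]_n}) (Pi Pi' : seq 'rV[R]_n -> R),
     linear_dirac p P Om -> assoc p P Om S Pi -> assoc p P Om S' Pi' ->
     S = S' /\ eq_on S p Pi Pi') /\
  (* it is injective *)
  (forall (P P' : {vspace 'rV[R]_n}) (Om Om' : seq 'rV[R]_n -> R)
          (S : {vspace 'rV[R]_n}) (Pi Pi' : seq 'rV[R]_n -> R),
     linear_dirac p P Om -> linear_dirac p P' Om' ->
     assoc p P Om S Pi -> assoc p P' Om' S Pi' -> eq_on S p Pi Pi' ->
     P = P' /\ eq_on P p Om Om') /\
  (* it is surjective *)
  (forall (S : {vspace 'rV[R]_n}) (Pi : seq 'rV[R]_n -> R),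
     dual_pair p S Pi ->
     exists (P : {vspace 'rV[R]_n}) (Om : seq 'rV[R]_n -> R),
       linear_dirac p P Om /\ assoc p P Om S Pi).
Proof.
case: p => [//|k] _. (* only 1 <= p is used *)
split.
  move=> P Om POm; have [S [Pi A]] := assoc_exists POm.
  by exists S, Pi; split=> //; exact: assoc_dual_pair POm A.
split; first by move=> P Om S S' Pi Pi' _; exact: assoc_unique.
split.
  move=> P P' Om Om' S Pi Pi' POm P'Om' A A' E.
  exact: assoc_unique (assoc_sym POm A) (assoc_eq_on E (assoc_sym P'Om' A')).
(* (H') for (S, Pi) is (H) read in V^* = V, so a dual pair is a Dirac structure. *)
move=> S Pi SPi; have [P [Om A]] := assoc_exists SPi.
by exists P, Om; split; [exact: assoc_dual_pair SPi A | exact: assoc_sym SPi A].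
Qed.
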